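(* Let $\mathcal E_i\equiv1\to H_i\xrightarrow{\alpha_i}G_i\xrightarrow{\beta_i}K_i\to1$ ($i=1,2$) be central extensions of multiplicative Lie algebras that are isoclinic via $(\lambda,\mu)$. Then: (1) $G_1$ and $G_2$ are isoclinic via $(\bar\lambda,\mu)$, where $\bar\lambda:G_1/\mathcal Z(G_1)\to G_2/\mathcal Z(G_2)$ is the isomorphism induced by $\lambda$, namely $\bar\lambda(g_1\mathcal Z(G_1))=g_2\mathcal Z(G_2)$ whenever $\beta_2(g_2)=\lambda(\beta_1(g_1))$; (2) $\alpha_1(H_1)=\mathcal Z(G_1)$ if and only if $\alpha_2(H_2)=\mathcal Z(G_2)$.
   Context: A multiplicative Lie algebra is a group $(G,\cdot)$ with a binary operation $\star$ such that for all $x,y,z\in G$: $x\star x=1$; $x\star(yz)=(x\star y)\,{}^y(x\star z)$; $(xy)\star z={}^x(y\star z)(x\star z)$; $((x\star y)\star{}^yz)((y\star z)\star{}^zx)((z\star x)\star{}^xy)=1$; ${}^z(x\star y)={}^zx\star{}^zy$, where ${}^xy=xyx^{-1}$. $Z(G)$ is the group center, $LZ(G)=\{x: x\star y=1\ \forall y\}$, $\mathcal Z(G)=LZ(G)\cap Z(G)$; $[x,y]$ is the group commutator; ${}^M[G,G]=(G\star G)[G,G]$ with $G\star G$ the ideal generated by all $a\star b$. A central extension is a short exact sequence $1\to H\xrightarrow{\alpha}G\xrightarrow{\beta}K\to1$ of multiplicative Lie algebras with $\alpha(H)\subseteq\mathcal Z(G)$. Central extensions $\mathcal E_1,\mathcal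 E_2$ are isoclinic via $(\lambda,\mu)$ if $\lambda:K_1\to K_2$ and $\mu:{}^M[G_1,G_1]\to{}^M[G_2,G_2]$ are multiplicative Lie algebra isomorphisms with $\mu([g,g'])=[h,h']$ and $\mu(g\star g')=h\star h'$ whenever $g,g'\in G_1$, $h,h'\in G_2$ satisfy $\beta_2(h)=\lambda\beta_1(g)$, $\beta_2(h')=\lambda\beta_1(g')$. Two multiplicative Lie algebras $G_1,G_2$ are isoclinic via $(\bar\lambda,\mu)$ if $\bar\lambda:G_1/\mathcal Z(G_1)\to G_2/\mathcal Z(G_2)$ and $\mu:{}^M[G_1,G_1]\to{}^M[G_2,G_2]$ are isomorphisms with $\mu([g,g'])=[h,h']$, $\mu(g\star g')=h\star h'$ whenever $\bar\lambda(g\mathcal Z(G_1))=h\mathcal Z(G_2)$, $\bar\lambda(g'\mathcal Z(G_1))=h'\mathcal Z(G_2)$. *)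

Set Implicit Arguments.

Record MLA := {
  car :> Type;
  mul : car -> car -> car;
  one : car;
  inv : car -> car;
  star : car -> car -> car;
  mulA : forall x y z, mul x (mul y z) = mul (mul x y) z;
  mul1g : forall x, mul one x = x;
  mulg1 : forall x, mul x one = x;
  mulVg : forall x, mul (inv x) x = one;
  mulgV : forall x, mul x (inv x) = one;
  star_nil : forall x, star x x = one;
  star_mulr : forall x y z,
      star x (mul y z) = mul (star x y) (mul (mul y (star x z)) (inv y));
  star_mull : forall x y z,
      star (mul x y) z = mul (mul (mul x (star y z)) (inv x)) (star x z);
  star_jacobi : forall x y z,
      mul (mul (star (star x y) (mul (mul y z) (inv y)))
               (star (star y z) (mul (mul z x) (inv z))))
          (star (star z x) (mul (mul x y) (inv x))) = one;
  star_conj : forall x y z,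
      mul (mul z (star x y)) (inv z)
      = star (mul (mul z x) (inv z)) (mul (mul z y) (inv z))
}.

Arguments mul {m} _ _.
Arguments one {m}.
Arguments inv {m} _.
Arguments star {m} _ _.

Section Defs.
Variable G : MLA.

Definition conjg (x y : G) : G := mul (mul x y) (inv x).
Definition commg (x y : G) : G := mul (mul (mul x y) (inv x)) (inv y).

Definition in_center (x : G) : Prop := forall y : G, mul x y = mul y x.
Definition in_lie_center (x : G) : Prop := forall y : G, star x y = one.
Definition in_Zcal (x : G) : Prop := in_lie_center x /\ in_center x.

Inductive in_star_ideal : G -> Prop :=
  | si_gen : forall a b, in_star_ideal (star a b)
  | si_one : in_star_ideal one
  | si_mul : forall x y, in_star_ideal x -> in_star_ideal y -> in_star_ideal (mul x y)
  | si_inv : forall x, in_star_ideal x -> in_star_ideal (inv x)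
  | si_conj : forall g x, in_star_ideal x -> in_star_ideal (conjg g x)
  | si_starl : forall g x, in_star_ideal x -> in_star_ideal (star g x)
  | si_starr : forall g x, in_star_ideal x -> in_star_ideal (star x g).

Inductive in_derived : G -> Prop :=
  | dv_gen : forall a b, in_derived (commg a b)
  | dv_one : in_derived one
  | dv_mul : forall x y, in_derived x -> in_derived y -> in_derived (mul x y)
  | dv_inv : forall x, in_derived x -> in_derived (inv x).

Definition in_MGG (x : G) : Prop :=
  exists a b, in_star_ideal a /\ in_derived b /\ x = mul a b.

End Defs.

Arguments conjg {G} _ _.
Arguments commg {G} _ _.
Arguments in_center {G} _.
Arguments in_lie_center {G} _.
Arguments in_Zcal {G} _.
Arguments in_star_ideal {G} _.
Arguments in_derived {G} _.
Arguments in_MGG {G} _.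

Definition mla_hom {G1 G2 : MLA} (f : G1 -> G2) : Prop :=
  forall x y : G1, f (mul x y) = mul (f x) (f y) /\ f (star x y) = star (f x) (f y).

Definition mla_iso {G1 G2 : MLA} (f : G1 -> G2) : Prop :=
  mla_hom f /\ (forall x y, f x = f y -> x = y) /\ (forall y, exists x, f x = y).

(** An MLA isomorphism ^M[G1,G1] -> ^M[G2,G2], given by a function on G1
    whose behaviour is only relevant on ^M[G1,G1]. *)
Definition MGG_iso {G1 G2 : MLA} (mu : G1 -> G2) : Prop :=
  (forall x, in_MGG x -> in_MGG (mu x)) /\
  (forall x y, in_MGG x -> in_MGG y ->
     mu (mul x y) = mul (mu x) (mu y) /\ mu (star x y) = star (mu x) (mu y)) /\
  (forall x y, in_MGG x -> in_MGG y -> mu x = mu y -> x = y) /\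
  (forall y, in_MGG y -> exists x, in_MGG x /\ mu x = y).

Definition central_extension {H G K : MLA} (alpha : H -> G) (beta : G -> K) : Prop :=
  mla_hom alpha /\ mla_hom beta /\
  (forall x y, alpha x = alpha y -> x = y) /\
  (forall k, exists g, beta g = k) /\
  (forall g, (exists h, alpha h = g) <-> beta g = one) /\
  (forall h, in_Zcal (alpha h)).

Definition ext_isoclinic_via {H1 G1 K1 H2 G2 K2 : MLA}
    (alpha1 : H1 -> G1) (beta1 : G1 -> K1) (alpha2 : H2 -> G2) (beta2 : G2 -> K2)
    (lam : K1 -> K2) (mu : G1 -> G2) : Prop :=
  mla_iso lam /\ MGG_iso mu /\
  (forall (g g' : G1) (h h' : G2),
     beta2 h = lam (beta1 g) -> beta2 h' = lam (beta1 g') ->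
     mu (commg g g') = commg h h' /\ mu (star g g') = star h h').

(** Maps G1/𝒵(G1) -> G2/𝒵(G2) are represented on representatives: f : G1 -> G2
    represents the map  g 𝒵(G1) |-> f g 𝒵(G2).  Cosets: x𝒵 = y𝒵 iff x^-1 y ∈ 𝒵. *)
Definition same_coset {G : MLA} (x y : G) : Prop := in_Zcal (mul (inv x) y).

Definition quotZ_iso {G1 G2 : MLA} (f : G1 -> G2) : Prop :=
  (forall x y, same_coset x y -> same_coset (f x) (f y)) /\
  (forall x y, same_coset (f (mul x y)) (mul (f x) (f y))) /\
  (forall x y, same_coset (f (star x y)) (star (f x) (f y))) /\
  (forall x y, same_coset (f x) (f y) -> same_coset x y) /\
  (forall y, exists x, same_coset (f x) y).

Definition mla_isoclinic_via {G1 G2 : MLA} (lb : G1 -> G2) (mu : G1 -> G2) : Prop :=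
  quotZ_iso lb /\ MGG_iso mu /\
  (forall (g g' : G1) (h h' : G2),
     same_coset (lb g) h -> same_coset (lb g') h' ->
     mu (commg g g') = commg h h' /\ mu (star g g') = star h h').

From Stdlib Require Import ClassicalEpsilon.

(* Call g1 in G1 and g2 in G2 corresponding when beta2 g2 = lam (beta1 g1).  The
   kernel of beta2 is central, so corresponding elements are determined up to 𝒵,
   and the isoclinism says that mu sends [g1, g1'] and g1 ⋆ g1' to [g2, g2'] and
   g2 ⋆ g2' for corresponding pairs.  An element lies in 𝒵 exactly when all its
   commutators and star products are trivial; since mu fixes 1 and is injective on
   ^M[G1,G1], g1 lies in 𝒵(G1) iff g2 lies in 𝒵(G2).  Therefore any choice of
   corresponding representatives induces an isomorphism G1/𝒵(G1) -> G2/𝒵(G2)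
   compatible with mu, and 𝒵(G1) <= ker beta1 iff 𝒵(G2) <= ker beta2, which is (2)
   because alpha_i(H_i) = ker beta_i <= 𝒵(G_i). *)

Section GroupFacts.
Context {G : MLA}.
Implicit Types x y z a b : G.

Lemma mulAr x y z : mul (mul x y) z = mul x (mul y z).
Proof. now rewrite mulA. Qed.

Lemma mulKVg x y : mul x (mul (inv x) y) = y.
Proof. now rewrite mulA, mulgV, mul1g. Qed.

Lemma mulKg x y : mul (inv x) (mul x y) = y.
Proof. now rewrite mulA, mulVg, mul1g. Qed.

Lemma mulgI a x y : mul a x = mul a y -> x = y.
Proof. intro E. now rewrite <- (mulKg a x), E, mulKg. Qed.

Lemma mulIg a x y : mul x a = mul y a -> x = y.
Proof.
  intro E. rewrite <- (mulg1 _ x), <- (mulg1 _ y), <- (mulgV _ a), !mulA, E.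
  reflexivity.
Qed.

Lemma inv_unique a b : mul a b = one -> b = inv a.
Proof. intro E. apply (mulgI a). now rewrite E, mulgV. Qed.

Lemma invMg a b : inv (mul a b) = mul (inv b) (inv a).
Proof. symmetry. apply inv_unique. now rewrite mulAr, mulKVg, mulgV. Qed.

End GroupFacts.

#[global] Hint Rewrite @mulAr mul1g mulg1 mulgV mulVg @mulKVg @mulKg @invMg star_nil
  : gsimpl.

Ltac gsimpl := autorewrite with gsimpl in *.

Section CentreFacts.
Context {G : MLA}.
Implicit Types x y z a b : G.

Lemma commg1_commute a b : commg a b = one -> mul a b = mul b a.
Proof.
  unfold commg. intro E. apply (mulIg (inv a)), (mulIg (inv b)). gsimpl.
  now rewrite E.
Qed.

Lemma commg1_center a b : in_center a -> commg a b = one.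
Proof. intro C. unfold commg. rewrite C. now gsimpl. Qed.

(* Expand (xy) ⋆ (xy) = 1 by both Leibniz rules. *)
Lemma star_anticomm x y : mul (star y x) (star x y) = one.
Proof.
  pose proof (star_nil _ (mul x y)) as E.
  rewrite star_mull, star_mulr, (star_mulr _ x x y), star_nil in E. gsimpl.
  apply (mulgI x), (mulIg (inv x)). now gsimpl.
Qed.

Lemma star1_lie_center a z : in_lie_center z -> star a z = one.
Proof.
  intro Z. pose proof (star_anticomm a z) as E. now rewrite (Z a), mul1g in E.
Qed.

Lemma Zcal_iff x : in_Zcal x <-> forall y, commg x y = one /\ star x y = one.
Proof.
  split.
  - intros [L C] y. split; [now apply commg1_center | apply L].
  - intro T. split; intro y; [apply T | apply commg1_commute, T].
Qed.

Lemma commgMZl a z b : in_Zcal z -> commg (mul a z) b = commg a b.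
Proof.
  intros [_ C]. unfold commg. gsimpl. rewrite <- (mulAr z b), C. now gsimpl.
Qed.

Lemma commgMZr a b z : in_Zcal z -> commg a (mul b z) = commg a b.
Proof.
  intros [_ C]. unfold commg. gsimpl. rewrite <- (mulAr z (inv a)), C.
  now gsimpl.
Qed.

Lemma starMZl a z b : in_Zcal z -> star (mul a z) b = star a b.
Proof. intros [L _]. rewrite star_mull, (L b). now gsimpl. Qed.

Lemma starMZr a b z : in_Zcal z -> star a (mul b z) = star a b.
Proof. intros [L _]. rewrite star_mulr, (star1_lie_center a z L). now gsimpl. Qed.

Lemma commg_same_coset {a a' b b'} :
  same_coset a a' -> same_coset b b' -> commg a b = commg a' b'.
Proof.
  intros Za Zb. rewrite <- (mulKVg a a'), <- (mulKVg b b').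
  now rewrite commgMZl, commgMZr.
Qed.

Lemma star_same_coset {a a' b b'} :
  same_coset a a' -> same_coset b b' -> star a b = star a' b'.
Proof.
  intros Za Zb. rewrite <- (mulKVg a a'), <- (mulKVg b b').
  now rewrite starMZl, starMZr.
Qed.

Lemma MGG1 : in_MGG (@one G).
Proof. exists one, one. repeat split; try constructor. now gsimpl. Qed.

Lemma MGG_commg a b : in_MGG (commg a b).
Proof. exists one, (commg a b). repeat split; try constructor. now gsimpl. Qed.

Lemma MGG_star a b : in_MGG (star a b).
Proof. exists (star a b), one. repeat split; try constructor. now gsimpl. Qed.

End CentreFacts.

Lemma hom1 {G1 G2 : MLA} (f : G1 -> G2) : mla_hom f -> f one = one.
Proof.
  intro Hf. apply (mulgI (f one)). rewrite <- (proj1 (Hf one one)). now gsimpl.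
Qed.

Lemma homV {G1 G2 : MLA} (f : G1 -> G2) x : mla_hom f -> f (inv x) = inv (f x).
Proof. intro Hf. apply inv_unique. now rewrite <- (proj1 (Hf _ _)), mulgV, hom1. Qed.

Lemma MGG_iso1 {G1 G2 : MLA} (mu : G1 -> G2) : MGG_iso mu -> mu one = one.
Proof.
  intros (_ & Hmu & _). apply (mulgI (mu one)).
  rewrite <- (proj1 (Hmu one one MGG1 MGG1)). now gsimpl.
Qed.

Lemma MGG_iso_eq1 {G1 G2 : MLA} (mu : G1 -> G2) x :
  MGG_iso mu -> in_MGG x -> mu x = one -> x = one.
Proof.
  intros Iso Mx E. pose proof Iso as (_ & _ & Inj & _).
  apply Inj; [exact Mx | apply MGG1 | now rewrite E, (MGG_iso1 mu Iso)].
Qed.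

Lemma surj_section {A B : Type} (f : A -> B) :
  (forall b, exists a, f a = b) -> exists s : B -> A, forall b, f (s b) = b.
Proof.
  intro Sf. exists (fun b => proj1_sig (constructive_indefinite_description _ (Sf b))).
  intro b. exact (proj2_sig (constructive_indefinite_description _ (Sf b))).
Qed.

Lemma central_extension_ker {H G K : MLA} {alpha : H -> G} {beta : G -> K} :
  central_extension alpha beta -> forall g, beta g = one -> in_Zcal g.
Proof.
  intros (_ & _ & _ & _ & Ker & Zc) g E. apply Ker in E as [h <-]. apply Zc.
Qed.

Lemma central_extension_image_Zcal {H G K : MLA} {alpha : H -> G} {beta : G -> K} :
  central_extension alpha beta ->
  (forall g, (exists h, alpha h = g) <-> in_Zcal g) <->
  (forall g, in_Zcal g -> beta g = one).
Proof.
  intros CE. pose proof CE as (_ & _ & _ & _ & Ker & Zc). split.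
  - intros Im g Zg. now apply Ker, Im.
  - intros Sub g. split; [intros [h <-]; apply Zc | intro Zg; now apply Ker, Sub].
Qed.

Section Isoclinism.
Variables H1 G1 K1 H2 G2 K2 : MLA.
Variables (alpha1 : H1 -> G1) (beta1 : G1 -> K1).
Variables (alpha2 : H2 -> G2) (beta2 : G2 -> K2).
Variables (lam : K1 -> K2) (mu : G1 -> G2).
Hypothesis CE1 : central_extension alpha1 beta1.
Hypothesis CE2 : central_extension alpha2 beta2.
Hypothesis ISO : ext_isoclinic_via alpha1 beta1 alpha2 beta2 lam mu.

Let beta1_hom : mla_hom beta1 := proj1 (proj2 CE1).
Let beta2_hom : mla_hom beta2 := proj1 (proj2 CE2).
Let beta1_surj : forall k, exists g, beta1 g = k := proj1 (proj2 (proj2 (proj2 CE1))).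
Let beta2_surj : forall k, exists g, beta2 g = k := proj1 (proj2 (proj2 (proj2 CE2))).
Let lam_hom : mla_hom lam := proj1 (proj1 ISO).
Let lam_inj : forall x y, lam x = lam y -> x = y := proj1 (proj2 (proj1 ISO)).
Let lam_surj : forall y, exists x, lam x = y := proj2 (proj2 (proj1 ISO)).
Let mu_iso : MGG_iso mu := proj1 (proj2 ISO).

Definition corr (g1 : G1) (g2 : G2) : Prop := beta2 g2 = lam (beta1 g1).

Let mu_corr : forall g g' h h', corr g h -> corr g' h' ->
  mu (commg g g') = commg h h' /\ mu (star g g') = star h h' := proj2 (proj2 ISO).

Lemma corr_exists_r g1 : exists g2, corr g1 g2.
Proof. apply beta2_surj. Qed.

Lemma corr_exists_l g2 : exists g1, corr g1 g2.
Proof.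
  destruct (lam_surj (beta2 g2)) as [k Ek]. destruct (beta1_surj k) as [g1 <-].
  now exists g1.
Qed.

Lemma corrV {x y} : corr x y -> corr (inv x) (inv y).
Proof. unfold corr. intro E. now rewrite !homV, E. Qed.

Lemma corrM {x x' y y'} : corr x y -> corr x' y' -> corr (mul x x') (mul y y').
Proof.
  unfold corr. intros E E'.
  now rewrite (proj1 (beta2_hom _ _)), (proj1 (beta1_hom _ _)), (proj1 (lam_hom _ _)), E, E'.
Qed.

Lemma corr_star {x x' y y'} : corr x y -> corr x' y' -> corr (star x x') (star y y').
Proof.
  unfold corr. intros E E'.
  now rewrite (proj2 (beta2_hom _ _)), (proj2 (beta1_hom _ _)), (proj2 (lam_hom _ _)), E, E'.
Qed.

Lemma corr_same_coset {x y y'} : corr x y -> corr x y' -> same_coset y y'.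
Proof.
  unfold corr, same_coset. intros E E'. apply (central_extension_ker CE2).
  rewrite (proj1 (beta2_hom _ _)), homV, E, E' by exact beta2_hom. apply mulVg.
Qed.

Lemma corr_Zcal {g1 g2} : corr g1 g2 -> in_Zcal g1 <-> in_Zcal g2.
Proof.
  intro E. rewrite !Zcal_iff. split.
  - intros Z1 h'. destruct (corr_exists_l h') as [g' E'].
    destruct (mu_corr _ _ _ _ E E') as [<- <-]. destruct (Z1 g') as [-> ->].
    now rewrite (MGG_iso1 mu mu_iso).
  - intros Z2 g'. destruct (corr_exists_r g') as [h' E'].
    destruct (mu_corr _ _ _ _ E E') as [C S]. destruct (Z2 h') as [C1 S1].
    split; apply (MGG_iso_eq1 mu _ mu_iso);
      auto using MGG_commg, MGG_star; congruence.
Qed.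

Section Representatives.
Variable lb : G1 -> G2.
Hypothesis lb_corr : forall g, corr g (lb g).

Lemma same_coset_lb x y : same_coset (lb x) (lb y) <-> same_coset x y.
Proof.
  symmetry. apply corr_Zcal, corrM; [apply corrV|]; apply lb_corr.
Qed.

Lemma quotZ_iso_lb : quotZ_iso lb.
Proof.
  split; [|split; [|split; [|split]]].
  - intros x y. apply same_coset_lb.
  - intros x y. apply (corr_same_coset (lb_corr _)), corrM; apply lb_corr.
  - intros x y. apply (corr_same_coset (lb_corr _)), corr_star; apply lb_corr.
  - intros x y. apply same_coset_lb.
  - intro y. destruct (corr_exists_l y) as [x E]. exists x.
    exact (corr_same_coset (lb_corr x) E).
Qed.

Lemma isoclinic_lb : mla_isoclinic_via lb mu.
Proof.
  split; [exact quotZ_iso_lb | split; [exact mu_iso|]].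
  intros g g' h h' S S'.
  rewrite <- (commg_same_coset S S'), <- (star_same_coset S S').
  apply mu_corr; apply lb_corr.
Qed.

End Representatives.

Lemma isoclinic_induced :
  exists lb : G1 -> G2,
    (forall g1 g2, corr g1 g2 -> same_coset (lb g1) g2) /\ mla_isoclinic_via lb mu.
Proof.
  destruct (surj_section beta2 beta2_surj) as [s Hs].
  set (lb g := s (lam (beta1 g))).
  assert (lb_corr : forall g, corr g (lb g)) by (intro g; apply Hs).
  exists lb. split; [|exact (isoclinic_lb lb lb_corr)].
  intros g1 g2. exact (corr_same_coset (lb_corr g1)).
Qed.

Lemma Zcal_sub_ker_transfer :
  (forall g, in_Zcal g -> beta1 g = one) <-> (forall g, in_Zcal g -> beta2 g = one).
Proof.
  split.
  - intros Sub1 g2 Z2. destruct (corr_exists_l g2) as [g1 E].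
    rewrite E, Sub1 by now apply (corr_Zcal E). now apply hom1.
  - intros Sub2 g1 Z1. destruct (corr_exists_r g1) as [g2 E].
    apply lam_inj. rewrite <- E, Sub2 by now apply (corr_Zcal E).
    symmetry. now apply hom1.
Qed.

End Isoclinism.

Theorem proposition4p3 (H1 G1 K1 H2 G2 K2 : MLA)
    (alpha1 : H1 -> G1) (beta1 : G1 -> K1) (alpha2 : H2 -> G2) (beta2 : G2 -> K2)
    (lam : K1 -> K2) (mu : G1 -> G2) :
  central_extension alpha1 beta1 ->
  central_extension alpha2 beta2 ->
  ext_isoclinic_via alpha1 beta1 alpha2 beta2 lam mu ->
  (exists lb : G1 -> G2,
      (* lb represents the map induced by lam:
         lb(g1 𝒵(G1)) = g2 𝒵(G2) whenever beta2 g2 = lam (beta1 g1) *)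
      (forall (g1 : G1) (g2 : G2), beta2 g2 = lam (beta1 g1) -> same_coset (lb g1) g2) /\
      mla_isoclinic_via lb mu) /\
  ((forall g : G1, (exists h, alpha1 h = g) <-> in_Zcal g) <->
   (forall g : G2, (exists h, alpha2 h = g) <-> in_Zcal g)).
Proof.
  intros CE1 CE2 ISO. split.
  - eapply isoclinic_induced; eassumption.
  - rewrite (central_extension_image_Zcal CE1), (central_extension_image_Zcal CE2).
    eapply Zcal_sub_ker_transfer; eassumption.
Qed.
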